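(* Let $\mathcal{H}$ be a complex Hilbert space. The inclusion map $\mathcal{P}(\mathcal{H})\hookrightarrow\mathcal{P}_{\mathbb{R}}(\mathcal{H})$, $P\mapsto P$, is an injective, completely additive homomorphism of involution lattices which is covariant with respect to the actions $P\mapsto UPU^*$ of the group $\mathrm{AU}(\mathcal{H})$ of all unitary and antiunitary operators on $\mathcal{H}$.
   Context: $\mathcal{P}(\mathcal{H})$ is the lattice of (complex linear) orthogonal projections with operator order, orthocomplement $P^\perp=1-P$, minimal/maximal elements $0,1$. $\mathcal{P}_{\mathbb{R}}(\mathcal{H})$ is the set of real orthogonal projections on $\mathcal{H}$ (real linear, selfadjoint with respect to $\mathrm{Re}\langle\cdot,\cdot\rangle$, idempotent), i.e. projections onto closed real linear subspaces; it is ordered by $E\le F\iff E\mathcal{H}\subset F\mathcal{H}$, has $0,1$, join = projection onto the closed real span, meet = projection onto the intersection, and involution $E'=1+iEi$ (the projection onto the symplectic complement $\{\xi:\mathrm{Im}\langle\xi,h\rangle=0\ \forall h\in E\mathcal{H}\}$). An involution lattice is a $\sigma$-complete bounded lattice with an order-reversing involution (not necessarily a complement); a homomorphism of involution lattices preserves $0$, $1$, the involution, and binary joins and meets. A map is completely additive if it maps the join of any (arbitrary) family of pairwise separated elements ($A\le B^{\text{involution}}$ for distinct $A,B$) to the join of the images. *)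

From HB Require Import structures.
From mathcomp Require Import all_boot all_order all_algebra.
From mathcomp Require Import complex reals.
Set Implicit Arguments. Unset Strict Implicit. Unset Printing Implicit Defensive.
Import Order.TTheory GRing.Theory Num.Theory.
Local Open Scope ring_scope.

Definition sqnorm (R : realType) (H : lmodType R[i]) (ip : H -> H -> R[i])
  (x : H) : R := complex.Re (ip x x).

Definition is_complex_hilbert (R : realType) (H : lmodType R[i])
    (ip : H -> H -> R[i]) : Prop :=
  (forall (a : R[i]) (x y z : H), ip (a *: x + y) z = a * ip x z + ip y z) /\
  (forall x y : H, ip x y = conjc (ip y x)) /\
  (forall x : H, 0 <= ip x x) /\
  (forall x : H, ip x x = 0 -> x = 0) /\
  (forall u : nat -> H,
     (forall e : R, 0 < e -> exists N : nat, forall m n : nat,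
        (N <= m)%N -> (N <= n)%N -> sqnorm ip (u m - u n) < e) ->
     exists l : H, forall e : R, 0 < e -> exists N : nat, forall n : nat,
        (N <= n)%N -> sqnorm ip (u n - l) < e).

Definition realC (R : realType) (r : R) : R[i] := Complex r 0.
Definition iC (R : realType) : R[i] := Complex 0 1.

Definition is_projC (R : realType) (H : lmodType R[i]) (ip : H -> H -> R[i])
    (P : H -> H) : Prop :=
  (forall (a : R[i]) (x y : H), P (a *: x + y) = a *: P x + P y) /\
  (forall x y : H, ip (P x) y = ip x (P y)) /\
  (forall x : H, P (P x) = P x).

Definition leC (R : realType) (H : lmodType R[i]) (ip : H -> H -> R[i])
    (P Q : H -> H) : Prop :=
  forall x : H, complex.Re (ip (P x) x) <= complex.Re (ip (Q x) x).

Definition perpC (R : realType) (H : lmodType R[i]) (P : H -> H) : H -> H :=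
  fun x => x - P x.

Definition is_projR (R : realType) (H : lmodType R[i]) (ip : H -> H -> R[i])
    (E : H -> H) : Prop :=
  (forall (r : R) (x y : H), E (realC r *: x + y) = realC r *: E x + E y) /\
  (forall x y : H, complex.Re (ip (E x) y) = complex.Re (ip x (E y))) /\
  (forall x : H, E (E x) = E x).

Definition leR (R : realType) (H : lmodType R[i]) (E F : H -> H) : Prop :=
  forall x : H, exists y : H, F y = E x.

Definition invR (R : realType) (H : lmodType R[i]) (E : H -> H) : H -> H :=
  fun x => x + iC R *: E (iC R *: x).

Definition is_joinC (R : realType) (H : lmodType R[i]) (ip : H -> H -> R[i])
    (S : (H -> H) -> Prop) (J : H -> H) : Prop :=
  is_projC ip J /\ (forall P, S P -> leC ip P J) /\
  (forall Q, is_projC ip Q -> (forall P, S P -> leC ip P Q) -> leC ip J Q).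

Definition is_meetC (R : realType) (H : lmodType R[i]) (ip : H -> H -> R[i])
    (S : (H -> H) -> Prop) (M : H -> H) : Prop :=
  is_projC ip M /\ (forall P, S P -> leC ip M P) /\
  (forall Q, is_projC ip Q -> (forall P, S P -> leC ip Q P) -> leC ip Q M).

Definition is_joinR (R : realType) (H : lmodType R[i]) (ip : H -> H -> R[i])
    (S : (H -> H) -> Prop) (J : H -> H) : Prop :=
  is_projR ip J /\ (forall E, S E -> leR E J) /\
  (forall F, is_projR ip F -> (forall E, S E -> leR E F) -> leR J F).

Definition is_meetR (R : realType) (H : lmodType R[i]) (ip : H -> H -> R[i])
    (S : (H -> H) -> Prop) (M : H -> H) : Prop :=
  is_projR ip M /\ (forall E, S E -> leR M E) /\
  (forall F, is_projR ip F -> (forall E, S E -> leR F E) -> leR F M).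

Definition pair_set (T : Type) (a b : T) : T -> Prop := fun x => x = a \/ x = b.
Definition range_set (I T : Type) (f : I -> T) : T -> Prop :=
  fun x => exists i, f i = x.

Definition is_unitary (R : realType) (H : lmodType R[i]) (ip : H -> H -> R[i])
    (U : H -> H) : Prop :=
  (forall (a : R[i]) (x y : H), U (a *: x + y) = a *: U x + U y) /\
  (forall x y : H, ip (U x) (U y) = ip x y) /\
  (forall y : H, exists x, U x = y).

Definition is_antiunitary (R : realType) (H : lmodType R[i])
    (ip : H -> H -> R[i]) (U : H -> H) : Prop :=
  (forall (a : R[i]) (x y : H), U (a *: x + y) = conjc a *: U x + U y) /\
  (forall x y : H, ip (U x) (U y) = conjc (ip x y)) /\
  (forall y : H, exists x, U x = y).

Definition is_AU (R : realType) (H : lmodType R[i]) (ip : H -> H -> R[i])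
    (U : H -> H) : Prop := is_unitary ip U \/ is_antiunitary ip U.

Definition inclusion (R : realType) (H : lmodType R[i]) (P : H -> H) : H -> H := P.

From HB Require Import structures.
From mathcomp Require Import all_boot all_order all_algebra.
From mathcomp Require Import complex reals.
From mathcomp Require Import lra.
From mathcomp Require Import boolp.
Import Order.TTheory GRing.Theory Num.Theory.
Local Open Scope ring_scope.

(* A complex projection is a real one, and for complex-linear E the involution
   1 + iEi is 1 - E.  The substance is that complex joins and meets stay joins
   and meets among real projections.  If a real projection F dominated every
   member of a family but not its complex join J, then for x in the range of J
   the vector y = x - Fx is Re-orthogonal to the range of F, hence killed by
   every member; so the complex projection onto the orthogonal complement of
   the line Cy bounds the family, hence J, which forces <x,y> = 0 and y = 0.
   Meets are dual, using the projection onto the line through a vector in the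
   range of a real lower bound.  Covariance holds because an (anti)unitary U
   is semilinear for the identity or for conjugation, both of which fix Re. *)

Lemma Re_conjc (R : realType) (a : R[i]) : complex.Re (conjc a) = complex.Re a.
Proof. by case: a. Qed.

Section PreHilbert.
Context {R : realType} {H : lmodType R[i]} {ip : H -> H -> R[i]}.
Hypothesis ipL : forall a x y z, ip (a *: x + y) z = a * ip x z + ip y z.
Hypothesis ip_conj : forall x y, ip x y = conjc (ip y x).
Hypothesis ip_ge0 : forall x, 0 <= ip x x.
Hypothesis ip_eq0 : forall x, ip x x = 0 -> x = 0.

Lemma ip0l z : ip 0 z = 0.
Proof.
by have := ipL 1 0 0 z; rewrite scale1r addr0 mul1r -{1}[ip 0 z]addr0 => /addrI.
Qed.

Lemma ipZl a x z : ip (a *: x) z = a * ip x z.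
Proof. by rewrite -[a *: x]addr0 ipL ip0l addr0. Qed.

Lemma ipBl x y z : ip (x - y) z = ip x z - ip y z.
Proof. by rewrite addrC -scaleN1r ipL mulN1r addrC. Qed.

Lemma ipZr a x y : ip x (a *: y) = conjc a * ip x y.
Proof. by rewrite ip_conj ipZl rmorphM /= -ip_conj. Qed.

Lemma ip0r x : ip x 0 = 0.
Proof. by rewrite -(scale0r 0) ipZr rmorph0 mul0r. Qed.

Lemma ipBr x y z : ip x (y - z) = ip x y - ip x z.
Proof. by rewrite ip_conj ipBl rmorphB /= -!ip_conj. Qed.

Lemma Re_ipC x y : complex.Re (ip x y) = complex.Re (ip y x).
Proof. by rewrite ip_conj Re_conjc. Qed.

Lemma Re_ip_ge0 x : 0 <= complex.Re (ip x x).
Proof. by have := ip_ge0 x; rewrite lecE => /andP[]. Qed.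

Lemma Re_ip_le0_eq0 x : complex.Re (ip x x) <= 0 -> x = 0.
Proof.
move=> le0; apply: ip_eq0; have := ip_ge0 x; rewrite lecE => /andP[/eqP Im0 _].
by apply/eqP; rewrite eq_complex Im0 eqxx andbT eq_le le0 Re_ip_ge0.
Qed.

Section ComplexProjection.
Context {P : H -> H}.
Hypothesis hP : is_projC ip P.

Lemma projC_linear a x y : P (a *: x + y) = a *: P x + P y.
Proof. by case: hP. Qed.

Lemma projC_sa x y : ip (P x) y = ip x (P y).
Proof. by case: hP => _ []. Qed.

Lemma projC_idem x : P (P x) = P x.
Proof. by case: hP => _ []. Qed.

Lemma projC0 : P 0 = 0.
Proof. by have := projC_linear 1 0 0; rewrite !scale1r addr0 -{1}[P 0]addr0 => /addrI. Qed.

Lemma projCZ a x : P (a *: x) = a *: P x.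
Proof. by rewrite -[a *: x]addr0 projC_linear projC0 addr0. Qed.

Lemma projCB x y : P (x - y) = P x - P y.
Proof. by rewrite addrC -scaleN1r projC_linear scaleN1r addrC. Qed.

Lemma projC_ip_range x : ip (P x) x = ip (P x) (P x).
Proof. by rewrite -{1}projC_idem projC_sa. Qed.

Lemma projC_pythagoras x : ip x x = ip (P x) (P x) + ip (x - P x) (x - P x).
Proof.
rewrite !(ipBl, ipBr) [ip x (P x)]ip_conj projC_ip_range -ip_conj.
by rewrite subrr subr0 addrC subrK.
Qed.

Lemma projC_norm_le x : complex.Re (ip (P x) (P x)) <= complex.Re (ip x x).
Proof. by rewrite [X in _ <= complex.Re X]projC_pythagoras raddfD lerDl Re_ip_ge0. Qed.

Lemma projC_perp : is_projC ip (perpC P).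
Proof.
rewrite /perpC; split=> [a x y|]; last split=> [x y|x].
- by rewrite projC_linear scalerBr opprD addrACA.
- by rewrite ipBl ipBr projC_sa.
- by rewrite projCB projC_idem subrr subr0.
Qed.

Lemma projC_projR : is_projR ip P.
Proof.
split=> [r x y|]; last split=> [x y|x].
- exact: projC_linear.
- by rewrite projC_sa.
- exact: projC_idem.
Qed.

End ComplexProjection.

Lemma leC_fix_range {P J} : is_projC ip P -> is_projC ip J -> leC ip P J ->
  forall x, J (P x) = P x.
Proof.
move=> hP hJ hPJ x; set v := P x; apply/esym/subr0_eq/Re_ip_le0_eq0.
have := hPJ v; rewrite /v (projC_idem hP) -/v (projC_ip_range hJ).
have := congr1 (@complex.Re R) (projC_pythagoras hJ v); rewrite raddfD /=.
lra.
Qed.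

Lemma leC_leR {P J} : is_projC ip P -> is_projC ip J -> leC ip P J -> leR P J.
Proof. by move=> hP hJ hPJ x; exists (P x); apply: leC_fix_range. Qed.

Lemma leC_of_comp {P Q} : is_projC ip P -> is_projC ip Q ->
  (forall z, P (Q z) = P z) -> leC ip P Q.
Proof.
move=> hP hQ PQ z.
by rewrite (projC_ip_range hP) (projC_ip_range hQ) -PQ projC_norm_le.
Qed.

Definition line_proj (y z : H) : H := (ip z y / ip y y) *: y.

Lemma line_proj_projC y : is_projC ip (line_proj y).
Proof.
rewrite /line_proj; split=> [a x z|]; last split=> [x z|x].
- by rewrite ipL mulrDl scalerDl scalerA mulrA.
- rewrite ipZl ipZr rmorphM /= conjc_inv -!ip_conj.
  by rewrite mulrAC [RHS]mulrAC [ip x y * _]mulrC.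
- have [->|y_neq0] := eqVneq y 0; first by rewrite !scaler0.
  have yy_neq0 : ip y y != 0 by apply: contra_neq y_neq0; apply: ip_eq0.
  by rewrite ipZl mulfK.
Qed.

Lemma line_proj_id y : line_proj y y = y.
Proof.
rewrite /line_proj; have [->|y_neq0] := eqVneq y 0; first by rewrite scaler0.
have yy_neq0 : ip y y != 0 by apply: contra_neq y_neq0; apply: ip_eq0.
by rewrite divff // scale1r.
Qed.

Lemma ip_line_proj x y : ip (line_proj y x) y = ip x y.
Proof.
rewrite /line_proj ipZl; have [->|y_neq0] := eqVneq y 0; first by rewrite !ip0r mulr0.
have yy_neq0 : ip y y != 0 by apply: contra_neq y_neq0; apply: ip_eq0.
by rewrite divfK.
Qed.

Lemma projR_Re_orth F x u : is_projR ip F -> complex.Re (ip (x - F x) (F u)) = 0.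
Proof.
case=> _ [F_sa F_idem].
by rewrite ipBl raddfB /= -[complex.Re (ip (F x) (F u))]F_sa F_idem -F_sa subrr.
Qed.

Lemma leR_projR_compl_eq0 {P F} : is_projC ip P -> is_projR ip F -> leR P F ->
  forall x, P (x - F x) = 0.
Proof.
move=> hP hF hPF x; set y := x - F x.
have [z Fz] := hPF y.
have FPy : F (P y) = P y by rewrite -Fz; case: hF => _ [_ ->].
apply: Re_ip_le0_eq0.
by rewrite projC_sa // projC_idem // -FPy projR_Re_orth.
Qed.

Lemma joinC_joinR S J : (forall P, S P -> is_projC ip P) ->
  is_joinC ip S J -> is_joinR ip S J.
Proof.
move=> hS [hJ [J_ub J_lub]]; split; first exact: projC_projR.
split=> [P SP | F hF F_ub x0]; first exact: leC_leR (hS P SP) hJ (J_ub P SP).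
set x := J x0; exists x; apply/esym/subr0_eq.
set y := x - F x; set L := line_proj y.
have hQ : is_projC ip (perpC L) by apply/projC_perp/line_proj_projC.
have Q_ub P : S P -> leC ip P (perpC L).
  move=> SP; have hP := hS P SP; apply: (leC_of_comp hP hQ) => z.
  have Py0 : P y = 0 := leR_projR_compl_eq0 hP hF (F_ub P SP) x.
  by rewrite /perpC /L /line_proj (projCB hP) (projCZ hP) Py0 scaler0 subr0.
have xy0 : ip x y = 0.
  have := leC_fix_range hJ hQ (J_lub _ hQ Q_ub) x0.
  rewrite /perpC -/x => /(congr1 (fun v => x - v)); rewrite subKr subrr => Lx0.
  by rewrite -ip_line_proj -/L Lx0 ip0l.
apply: Re_ip_le0_eq0; rewrite {1}/y ipBl raddfB /= xy0 Re_ipC projR_Re_orth //.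
by rewrite subrr.
Qed.

Lemma meetC_meetR S M : (forall P, S P -> is_projC ip P) ->
  is_meetC ip S M -> is_meetR ip S M.
Proof.
move=> hS [hM [M_lb M_glb]]; split; first exact: projC_projR.
split=> [P SP | F hF F_lb x]; first exact: leC_leR hM (hS P SP) (M_lb P SP).
exists (F x); have hL := line_proj_projC (F x).
have L_lb P : S P -> leC ip (line_proj (F x)) P.
  move=> SP; have hP := hS P SP; have [z Pz] := F_lb P SP x.
  have PFx : P (F x) = F x by rewrite -Pz projC_idem.
  apply: (leC_of_comp hL hP) => w.
  by rewrite /line_proj projC_sa // PFx.
by have := leC_fix_range hL hM (M_glb _ hL L_lb) (F x); rewrite line_proj_id.
Qed.

Lemma AU_semilinear U : is_AU ip U -> exists s : R[i] -> R[i],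
  [/\ involutive s, forall r, s (realC r) = realC r,
      forall c, complex.Re (s c) = complex.Re c,
      forall a x y, U (a *: x + y) = s a *: U x + U y &
      forall x y, ip (U x) (U y) = s (ip x y)].
Proof.
case=> [[U_lin [U_ip _]] | [U_lin [U_ip _]]]; first by exists id.
by exists conjc; split=> //; [exact: conjcK | exact: conjc_real | exact: Re_conjc].
Qed.

Section Covariance.
Context {s : R[i] -> R[i]} {U Us : H -> H}.
Hypothesis s_invol : involutive s.
Hypothesis s_real : forall r, s (realC r) = realC r.
Hypothesis Re_s : forall c, complex.Re (s c) = complex.Re c.
Hypothesis U_semilinear : forall a x y, U (a *: x + y) = s a *: U x + U y.
Hypothesis ip_U : forall x y, ip (U x) (U y) = s (ip x y).
Hypotheses (UK : cancel U Us) (UsK : cancel Us U).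

Lemma inv_semilinear a x y : Us (a *: x + y) = s a *: Us x + Us y.
Proof. by apply: (can_inj UK); rewrite UsK U_semilinear s_invol !UsK. Qed.

Lemma conj_projC P : is_projC ip P -> is_projC ip (U \o P \o Us).
Proof.
case=> [P_lin [P_sa P_idem]]; split=> [a x y|]; last split=> [x y|x]; rewrite /=.
- by rewrite inv_semilinear P_lin U_semilinear s_invol.
- by rewrite -{1}(UsK y) ip_U P_sa -ip_U UsK.
- by rewrite UK P_idem.
Qed.

Lemma conj_projR E : is_projR ip E -> is_projR ip (U \o E \o Us).
Proof.
case=> [E_lin [E_sa E_idem]]; split=> [r x y|]; last split=> [x y|x]; rewrite /=.
- by rewrite inv_semilinear s_real E_lin U_semilinear s_real.
- by rewrite -{1}(UsK y) ip_U Re_s E_sa -Re_s -ip_U UsK.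
- by rewrite UK E_idem.
Qed.

End Covariance.

End PreHilbert.

Lemma perpC_invR (R : realType) (H : lmodType R[i]) (P : H -> H) :
  (forall a x, P (a *: x) = a *: P x) -> perpC P = invR P.
Proof.
move=> PZ; apply: funext => x.
by rewrite /perpC /invR PZ scalerA -expr2 sqr_i scaleN1r.
Qed.

Theorem lemma2p10 (R : realType) (H : lmodType R[i]) (ip : H -> H -> R[i])
    (hH : is_complex_hilbert ip) :
  (* well defined: P(H) is mapped into P_R(H) *)
  (forall P, is_projC ip P -> is_projR ip (inclusion P)) /\
  (* injective *)
  (forall P Q, is_projC ip P -> is_projC ip Q ->
     inclusion P = inclusion Q -> P = Q) /\
  (* preserves 0 and 1 *)
  inclusion (fun _ : H => 0) = (fun _ : H => 0) /\
  inclusion (fun x : H => x) = (fun x : H => x) /\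
  (* preserves the involution *)
  (forall P, is_projC ip P -> inclusion (perpC P) = invR (inclusion P)) /\
  (* preserves binary joins and meets *)
  (forall P Q J, is_projC ip P -> is_projC ip Q ->
     is_joinC ip (pair_set P Q) J ->
     is_joinR ip (pair_set (inclusion P) (inclusion Q)) (inclusion J)) /\
  (forall P Q M, is_projC ip P -> is_projC ip Q ->
     is_meetC ip (pair_set P Q) M ->
     is_meetR ip (pair_set (inclusion P) (inclusion Q)) (inclusion M)) /\
  (* completely additive *)
  (forall (I : Type) (f : I -> H -> H) (J : H -> H),
     (forall i, is_projC ip (f i)) ->
     (forall i j, i <> j -> leC ip (f i) (perpC (f j))) ->
     is_joinC ip (range_set f) J ->
     is_joinR ip (range_set (fun i => inclusion (f i))) (inclusion J)) /\
  (* covariant w.r.t. the actions P |-> U P U^* of AU(H) *)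
  (forall U Ustar : H -> H, is_AU ip U ->
     cancel U Ustar -> cancel Ustar U ->
     (forall P, is_projC ip P -> is_projC ip (U \o P \o Ustar)) /\
     (forall E, is_projR ip E -> is_projR ip (U \o E \o Ustar)) /\
     (forall P, is_projC ip P ->
        inclusion (U \o P \o Ustar) = U \o inclusion P \o Ustar)).
Proof.
have [ipL [ip_conj [ip_ge0 [ip_eq0 _]]]] := hH.
have joinR := joinC_joinR ipL ip_conj ip_ge0 ip_eq0.
have meetR := meetC_meetR ipL ip_conj ip_ge0 ip_eq0.
rewrite /inclusion; split; first by move=> P /projC_projR.
do 3 (split; first by []).
split; first by move=> P hP; apply: perpC_invR => a x; apply: projCZ hP a x.
split; first by move=> P Q J hP hQ; apply: joinR => E [] ->.
split; first by move=> P Q M hP hQ; apply: meetR => E [] ->.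
split; first by move=> I f J hf _; apply: joinR => E [i <-].
move=> U Us /AU_semilinear [s [s_invol s_real Re_s U_lin U_ip]] UK UsK.
split; first exact: conj_projC s_invol U_lin U_ip UK UsK.
by split; first exact: conj_projR s_invol s_real Re_s U_lin U_ip UK UsK.
Qed.
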